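(* Let $n\ge 2$, $A\in\mathrm{Mat}_{n\times n}(\mathbb{R})$, and let $q\in\mathbb{R}^n$ be a formal equilibrium of the replicator vector field $X_A$. Let $B=-EAE^t$, $\eta_q(u)_i=q_i-\frac{e^{u_i}}{1+\sum_{j=1}^{n-1}e^{u_j}}$ ($u\in\mathbb{R}^{n-1}$), and $\tilde X_B(u)=B\eta_q(u)$. Suppose $D=(d_{ij})\in\mathrm{Mat}_{(n-1)\times(n-1)}(\mathbb{R})$ satisfies: (1) $DB$ is anti-symmetric; (2) $D^tQ_1$ is diagonal, where $(Q_1)_{ij}=q_i-\delta_{ij}$ (equivalently, the 1-form $(1+\sum_i e^{u_i})D^t\eta_q(u)$ is closed). Let $$H_D(u)=\sum_{i=1}^{n-1}\Big(\sum_{k=1}^{n-1}d_{ki}q_k\Big)u_i+\sum_{i=1}^{n-1}\Big(\Big(\sum_{k=1}^{n-1}d_{ki}q_k\Big)-d_{ii}\Big)e^{u_i},$$ $\mathbf{B}(u)=(1+\sum_{i=1}^{n-1}e^{u_i})B$, $\mathbf{D}^t(u)=(1+\sum_{i=1}^{n-1}e^{u_i})D^t$, and $\tilde Y_B=(1+\sum_{i=1}^{n-1}e^{u_i})\tilde X_B$. Then $L_{(\mathbf{B},\mathbf{D}^t)}=\{(\mathbf{B}(u)z,\mathbf{D}^t(u)z): z\in\mathbb{R}^{n-1}\}$ is a big-isotropic structure on $\mathbb{R}^{n-1}$ (a Dirac structure when $\ker B\cap\ker D^t=\{0\}$), and $(\tilde Y_B,dH_D)$ is a Hamiltonian system with respect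 to it, i.e. $(\tilde Y_B,dH_D)$ is a section of $L_{(\mathbf{B},\mathbf{D}^t)}$.
   Context: The replicator vector field is $X_A(x)_i=x_i((Ax)_i-x^tAx)$ on $\Delta^{n-1}=\{x\in\mathbb{R}^n_{\ge0}:\sum x_i=1\}$. A formal equilibrium is $q\in\mathbb{R}^n$ with $\sum_i q_i=1$ and $(Aq)_i=(Aq)_j$ for all $i,j$. $E=[-I_{n-1}\mid\mathbb{1}]$ ($(n-1)\times n$). $\tilde X_B$ is the pullback of $X_A$ to $\mathbb{R}^{n-1}$ by $\phi(u)=\big(\frac{e^{u_1}}{1+\sum_j e^{u_j}},\dots,\frac{e^{u_{n-1}}}{1+\sum_j e^{u_j}},\frac{1}{1+\sum_j e^{u_j}}\big)$. On $\mathbb{T}M=TM\oplus T^*M$ use the pairing $\frac12(\beta(X)+\alpha(Y))$ and Courant bracket $\big([X,Y],\mathcal{L}_X\beta-\mathcal{L}_Y\alpha+\frac12 d(\alpha(Y)-\beta(X))\big)$; a big-isotropic structure is an isotropic subbundle closed under the Courant bracket, a Dirac structure a maximal isotropic one closed under the bracket. A vector field $X$ is Hamiltonian with Hamiltonian $H$ with respect to such $L$ if $(X,dH)\in L$. *)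

(* R : realType, points of R^m are column
   vectors 'cV[R]_m (a normed space), vector fields / 1-forms on R^m are
   maps 'cV_m -> 'cV_m (components in the standard (co)frame). *)
From HB Require Import structures.
From mathcomp Require Import all_boot all_order all_algebra.
From mathcomp Require Import all_classical all_reals all_analysis.
Set Implicit Arguments. Unset Strict Implicit. Unset Printing Implicit Defensive.
Import Order.TTheory GRing.Theory Num.Theory.
Import numFieldNormedType.Exports.
Local Open Scope classical_set_scope.
Local Open Scope ring_scope.

Section Defs.
Variable R : realType.

Fixpoint Ck (m : nat) (W : normedModType R) (k : nat) (f : 'cV[R]_m -> W) : Prop :=
  match k with
  | 0 => continuous f
  | k.+1 => (forall x, differentiable f x) /\
            (forall v : 'cV[R]_m, Ck k (fun x => derive f x v))
  end.
Definition smooth (m : nat) (W : normedModType R) (f : 'cV[R]_m -> W) :=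
  forall k, Ck k f.

Definition ebasis (m : nat) (j : 'I_m) : 'cV[R]_m := delta_mx j 0.

Definition contr (m : nat) (a y : 'cV[R]_m) : R := \sum_i a i 0 * y i 0.

Definition dfun (m : nat) (f : 'cV[R]_m -> R^o) (u : 'cV[R]_m) : 'cV[R]_m :=
  \col_i derive f u (ebasis i).

Definition lie_bracket (m : nat) (X Y : 'cV[R]_m -> 'cV[R]_m) u : 'cV[R]_m :=
  derive Y u (X u) - derive X u (Y u).

Definition lie_der1 (m : nat) (X b : 'cV[R]_m -> 'cV[R]_m) u : 'cV[R]_m :=
  derive b u (X u) + \col_i contr (b u) (derive X u (ebasis i)).

(* generalized tangent bundle TM + T*M over R^m: pairs (vector, covector) *)
Definition pairing (m : nat) (p1 p2 : 'cV[R]_m * 'cV[R]_m) : R :=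
  (contr p2.2 p1.1 + contr p1.2 p2.1) / 2.

Definition courant (m : nat) (X a Y b : 'cV[R]_m -> 'cV[R]_m) u :
    'cV[R]_m * 'cV[R]_m :=
  (lie_bracket X Y u,
   lie_der1 X b u - lie_der1 Y a u
   + 2^-1 *: dfun (fun v => (contr (a v) (Y v) - contr (b v) (X v) : R^o)) u).

Definition distrib (m : nat) := 'cV[R]_m -> set ('cV[R]_m * 'cV[R]_m).

Definition lin_subspace (m : nat) (W : set ('cV[R]_m * 'cV[R]_m)) :=
  W (0, 0) /\
  (forall p1 p2, W p1 -> W p2 -> W (p1.1 + p2.1, p1.2 + p2.2)) /\
  (forall (c : R) p, W p -> W (c *: p.1, c *: p.2)).

Definition isotropic_set (m : nat) (W : set ('cV[R]_m * 'cV[R]_m)) :=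
  forall p1 p2, W p1 -> W p2 -> pairing p1 p2 = 0.

Definition lin_comb (m k : nat) (c : 'I_k -> R) (s : 'I_k -> 'cV[R]_m * 'cV[R]_m) :
    'cV[R]_m * 'cV[R]_m :=
  (\sum_i c i *: (s i).1, \sum_i c i *: (s i).2).

Definition smooth_subbundle (m : nat) (L : distrib m) :=
  (forall u, lin_subspace (L u)) /\
  forall u0, exists U : set 'cV[R]_m, open U /\ U u0 /\
    exists (k : nat) (s : 'I_k -> 'cV[R]_m -> 'cV[R]_m * 'cV[R]_m),
      (forall i, smooth (fun u => (s i u).1) /\ smooth (fun u => (s i u).2)) /\
      forall u, U u ->
        (forall p, L u p <-> exists c, p = lin_comb c (fun i => s i u)) /\
        (forall c, lin_comb c (fun i => s i u) = (0, 0) -> forall i, c i = 0).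

Definition courant_closed (m : nat) (L : distrib m) :=
  forall X a Y b : 'cV[R]_m -> 'cV[R]_m,
    smooth X -> smooth a -> smooth Y -> smooth b ->
    (forall u, L u (X u, a u)) -> (forall u, L u (Y u, b u)) ->
    forall u, L u (courant X a Y b u).

Definition big_isotropic (m : nat) (L : distrib m) :=
  smooth_subbundle L /\ (forall u, isotropic_set (L u)) /\ courant_closed L.

Definition maximal_isotropic_set (m : nat) (W : set ('cV[R]_m * 'cV[R]_m)) :=
  isotropic_set W /\
  forall W', lin_subspace W' -> isotropic_set W' -> W `<=` W' -> W' = W.

Definition dirac_structure (m : nat) (L : distrib m) :=
  smooth_subbundle L /\ (forall u, maximal_isotropic_set (L u)) /\ courant_closed L.

Definition hamiltonian (m : nat) (L : distrib m) (X : 'cV[R]_m -> 'cV[R]_m)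
    (H : 'cV[R]_m -> R^o) :=
  forall u, L u (X u, dfun H u).

(* index i : 'I_m (i.e. i+1 in 1..n-1) viewed inside 'I_(m.+1) = 'I_n *)
Definition wd (m : nat) (i : 'I_m) : 'I_m.+1 := widen_ord (leqnSn m) i.

Definition formal_equilibrium (n : nat) (A : 'M[R]_n) (q : 'cV[R]_n) :=
  \sum_i q i 0 = 1 /\ forall i j, (A *m q) i 0 = (A *m q) j 0.

Definition Emat (m : nat) : 'M[R]_(m, m.+1) :=
  \matrix_(i < m, j < m.+1)
    (if (j : nat) == m then 1 else if (j : nat) == (i : nat) then -1 else 0).

Definition Bmat (m : nat) (A : 'M[R]_m.+1) : 'M[R]_m :=
  - (Emat m *m A *m (Emat m)^T).

Definition Zfac (m : nat) (u : 'cV[R]_m) : R := 1 + \sum_j expR (u j 0).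

Definition eta (m : nat) (q : 'cV[R]_m.+1) (u : 'cV[R]_m) : 'cV[R]_m :=
  \col_i (q (wd i) 0 - expR (u i 0) / Zfac u).

Definition Xtilde (m : nat) (A : 'M[R]_m.+1) (q : 'cV[R]_m.+1) u : 'cV[R]_m :=
  Bmat A *m eta q u.

Definition Ytilde (m : nat) (A : 'M[R]_m.+1) (q : 'cV[R]_m.+1) u : 'cV[R]_m :=
  Zfac u *: Xtilde A q u.

Definition Q1 (m : nat) (q : 'cV[R]_m.+1) : 'M[R]_m :=
  \matrix_(i < m, j < m) (q (wd i) 0 - (i == j)%:R).

Definition HD (m : nat) (D : 'M[R]_m) (q : 'cV[R]_m.+1) (u : 'cV[R]_m) : R^o :=
  \sum_i (\sum_k D k i * q (wd k) 0) * u i 0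
  + \sum_i ((\sum_k D k i * q (wd k) 0) - D i i) * expR (u i 0).

Definition LBD (m : nat) (B D : 'M[R]_m) : distrib m :=
  fun u => [set p | exists z : 'cV[R]_m,
               p = (Zfac u *: (B *m z), Zfac u *: (D^T *m z))].

End Defs.

(* Since 1 + sum_i e^(u_i) > 0, every fibre of L_(B,D^t) is the same linear
   subspace V = {(B z, D^t z)} of R^m x R^m, and V is isotropic precisely
   because z^t (D B) w = - w^t (D B) z.  Being constant, V is spanned by a
   constant frame, and derivatives of its sections stay in V; for two sections
   of an isotropic V the correction terms of the Courant bracket pair a section
   with a derivative of the other and vanish, so the bracket reduces to
   (D_X Y - D_Y X, D_X b - D_Y a), again a section of V.  When
   ker B /\ ker D^t = 0, V has dimension m and lies in its annihilator, the
   kernel of (D^t ; B), which also has dimension 2m - m = m: hence V is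
   maximal.  Finally, diagonality of D^t Q_1 means d_ki = sum_l d_li q_l for
   k <> i, which turns dH_D into (1 + sum_i e^(u_i)) D^t eta_q(u), while
   Ytilde_B = (1 + sum_i e^(u_i)) B eta_q(u). *)

From Pilot Require Import Defs.
From HB Require Import structures.
From mathcomp Require Import all_boot all_order all_algebra.
From mathcomp Require Import all_classical all_reals all_analysis.
From mathcomp Require Import ring lra.
Import Order.TTheory GRing.Theory Num.Theory.
Import numFieldNormedType.Exports.
Set Implicit Arguments.
Unset Strict Implicit.
Unset Printing Implicit Defensive.

Local Open Scope classical_set_scope.
Local Open Scope ring_scope.

Section MatrixDerivatives.
Context {R : realType} {V : normedModType R}.

Lemma derivable_mx_entry p r (G : V -> 'M[R]_(p, r)) u v i j :
  derivable G u v -> derivable (fun x => G x i j) u v.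
Proof. by move/derivable_mxP. Qed.

Lemma derive_mx_entry p r (G : V -> 'M[R]_(p, r)) u v i j :
  derivable G u v -> 'D_v (fun x => G x i j) u = 'D_v G u i j.
Proof. by move=> dG; rewrite derive_mx // mxE. Qed.

Lemma mulmx_entryE s p r (K : 'M[R]_(s, p)) (G : V -> 'M[R]_(p, r)) i j :
  (fun x => (K *m G x) i j) = \sum_k K i k \*: (fun x => G x k j).
Proof. by apply/funext => x; rewrite mxE fct_sumE. Qed.

Lemma derivable_mulmxl s p r (K : 'M[R]_(s, p)) (G : V -> 'M[R]_(p, r)) u v :
  derivable G u v -> derivable (fun x => K *m G x) u v.
Proof.
move=> dG; apply/derivable_mxP => i j; rewrite mulmx_entryE.
by apply: derivable_sum => k; apply/derivableZ/derivable_mx_entry.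
Qed.

Lemma derive_mulmxl s p r (K : 'M[R]_(s, p)) (G : V -> 'M[R]_(p, r)) u v :
  derivable G u v -> 'D_v (fun x => K *m G x) u = K *m 'D_v G u.
Proof.
move=> dG; apply/matrixP => i j.
rewrite -derive_mx_entry; last exact: derivable_mulmxl.
rewrite mulmx_entryE derive_sum => [|k]; last exact/derivableZ/derivable_mx_entry.
rewrite mxE; apply: eq_bigr => k _.
by rewrite deriveZ ?derive_mx_entry //; exact: derivable_mx_entry.
Qed.

Lemma derive_kernel_eq0 k m (K1 K2 : 'M[R]_(k, m)) (X a : V -> 'cV[R]_m) u v :
  derivable X u v -> derivable a u v -> (forall x, K1 *m X x + K2 *m a x = 0) ->
  K1 *m 'D_v X u + K2 *m 'D_v a u = 0.
Proof.
move=> dX da ker0.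
have -> : 0 = 'D_v (fun x => K1 *m X x + K2 *m a x) u.
  by rewrite (funext ker0) derive_cst.
by rewrite deriveD ?derive_mulmxl //; exact: derivable_mulmxl.
Qed.

Lemma contr_funE m (a y : V -> 'cV[R]_m) :
  (fun x => contr (a x) (y x) : R^o) =
  \sum_k ((fun x => a x k 0) * (fun x => y x k 0)).
Proof. by apply/funext => x; rewrite /contr fct_sumE. Qed.

Lemma derivable_contr m (a y : V -> 'cV[R]_m) u v :
  derivable a u v -> derivable y u v ->
  derivable (fun x => contr (a x) (y x) : R^o) u v.
Proof.
move=> da dy; rewrite contr_funE; apply: derivable_sum => k.
by apply: derivableM; exact: derivable_mx_entry.
Qed.

Lemma derive_contr m (a y : V -> 'cV[R]_m) u v :
  derivable a u v -> derivable y u v ->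
  'D_v (fun x => contr (a x) (y x) : R^o) u =
  contr (a u) ('D_v y u) + contr ('D_v a u) (y u).
Proof.
move=> da dy; rewrite contr_funE derive_sum => [|k]; last first.
  by apply: derivableM; exact: derivable_mx_entry.
rewrite /contr -big_split /=; apply: eq_bigr => k _.
rewrite deriveM; try exact: derivable_mx_entry.
by rewrite !derive_mx_entry //; congr (_ + _); exact: mulrC.
Qed.

End MatrixDerivatives.

Section CoordinateDerivatives.
Context {R : realType} {m : nat}.
Implicit Types u v : 'cV[R]_m.

Lemma derivable_coord u v i : derivable (fun x : 'cV[R]_m => x i 0) u v.
Proof. by apply: derivable_mx_entry; exact: derivable_id. Qed.

Lemma derive_coord u v i : 'D_v (fun x : 'cV[R]_m => x i 0) u = v i 0.
Proof. by rewrite derive_mx_entry ?derive_id //; exact: derivable_id. Qed.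

Lemma differentiable_expR_coord u i :
  differentiable (expR \o fun x : 'cV[R]_m => x i 0) u.
Proof.
apply: differentiable_comp; first exact: differentiable_coord.
exact/derivable1_diffP/derivable_expR.
Qed.

Lemma derivable_expR_coord u v i :
  derivable (fun x : 'cV[R]_m => expR (x i 0)) u v.
Proof. exact/diff_derivable/differentiable_expR_coord. Qed.

Lemma derive_expR_coord u v i :
  'D_v (fun x : 'cV[R]_m => expR (x i 0)) u = expR (u i 0) * v i 0.
Proof.
have -> : (fun x : 'cV[R]_m => expR (x i 0)) = expR \o fun x => x i 0 by [].
rewrite deriveE; last exact: differentiable_expR_coord.
rewrite diff_comp; [|exact: differentiable_coord|exact/derivable1_diffP/derivable_expR].
rewrite diff1E /=; last exact/derivable1_diffP/derivable_expR.
rewrite -deriveE; last exact: differentiable_coord.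
by rewrite derive_coord derive1E derive_val mulrC.
Qed.

Lemma sum_mul_ebasis (f : 'I_m -> R) i : \sum_j f j * ebasis R i j 0 = f i.
Proof.
rewrite (bigD1 i) //= big1 => [|j ji]; rewrite /ebasis mxE ?eqxx ?mulr1 ?addr0 //.
by rewrite (negbTE ji) mulr0.
Qed.

Lemma Zfac_gt0 u : 0 < Zfac u.
Proof. by rewrite ltr_wpDr ?ltr01 // sumr_ge0 // => j _; exact: expR_ge0. Qed.

End CoordinateDerivatives.

Section HamiltonianFunction.
Variables (R : realType) (m : nat) (D : 'M[R]_m) (q : 'cV[R]_m.+1).

Let c i := \sum_k D k i * q (wd k) 0.

Lemma HD_funE :
  HD D q = \sum_i c i \*: (fun x : 'cV[R]_m => x i 0 : R^o)
         + \sum_i (c i - D i i) \*: (fun x : 'cV[R]_m => expR (x i 0) : R^o).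
Proof. by apply/funext => x; rewrite /HD /= !fct_sumE. Qed.

Lemma derive_HD u v :
  'D_v (HD D q) u =
  \sum_i (c i + (c i - D i i) * expR (u i 0)) * v i 0.
Proof.
have d1 i : derivable (c i \*: (fun x : 'cV[R]_m => x i 0 : R^o)) u v.
  exact/derivableZ/derivable_coord.
have d2 i : derivable ((c i - D i i) \*: (fun x : 'cV[R]_m => expR (x i 0) : R^o)) u v.
  exact/derivableZ/derivable_expR_coord.
rewrite HD_funE deriveD; try exact: derivable_sum.
rewrite !derive_sum // -big_split /=; apply: eq_bigr => i _.
rewrite !deriveZ ?derive_coord ?derive_expR_coord /=;
  [|exact: derivable_expR_coord|exact: derivable_coord].
by rewrite mulrDl -mulrA.
Qed.

Lemma dfun_HD u : dfun (HD D q) u = \col_i (c i + (c i - D i i) * expR (u i 0)).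
Proof. by apply/matrixP => i j; rewrite !mxE derive_HD sum_mul_ebasis. Qed.

Lemma Q1E : Q1 q = \matrix_(i, j) q (wd i) 0 - 1%:M.
Proof. by apply/matrixP => i j; rewrite !mxE eq_sym. Qed.

Lemma DtQ1E i k : (D^T *m Q1 q) i k = c i - D k i.
Proof.
rewrite Q1E mulmxBr mulmx1 !mxE; congr (_ - _).
by apply: eq_bigr => l _; rewrite !mxE.
Qed.

Lemma is_diag_DtQ1_offdiag :
  is_diag_mx (D^T *m Q1 q) -> forall k i, k != i -> D k i = c i.
Proof.
move=> /is_diag_mxP diag k i ki; apply/eqP; rewrite eq_sym -subr_eq0 -DtQ1E.
by rewrite diag // eq_sym.
Qed.

Lemma dfun_HD_diag u : is_diag_mx (D^T *m Q1 q) ->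
  dfun (HD D q) u = Zfac u *: (D^T *m Defs.eta q u).
Proof.
move=> diag; apply/matrixP => i j; rewrite (ord1 j) dfun_HD !mxE.
set e := fun k => expR (u k 0).
have Z0 : Zfac u != 0 by rewrite gt_eqF // Zfac_gt0.
have offdiag_vanish : \sum_k (c i - D k i) * e k = (c i - D i i) * e i.
  rewrite (bigD1 i) //= big1 ?addr0 // => k ki.
  by rewrite -(is_diag_DtQ1_offdiag diag ki) subrr mul0r.
have -> : Zfac u * \sum_k D^T i k * Defs.eta q u k 0 =
          Zfac u * c i - \sum_k D k i * e k.
  rewrite /c mulr_sumr [in RHS]mulr_sumr -sumrB.
  by apply: eq_bigr => k _; rewrite !mxE /e; field.
rewrite -offdiag_vanish /Zfac mulrDl mul1r mulr_suml -addrA; congr (_ + _).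
by rewrite -sumrB; apply: eq_bigr => k _; rewrite /e; ring.
Qed.

End HamiltonianFunction.

Lemma row_free_row_mx (F : fieldType) m n1 n2
    (X : 'M[F]_(m, n1)) (Y : 'M[F]_(m, n2)) :
  (forall w : 'rV[F]_m, w *m X = 0 -> w *m Y = 0 -> w = 0) -> row_free (row_mx X Y).
Proof.
move=> inj; rewrite -kermx_eq0; apply/eqP/row_matrixP => i; rewrite row0.
have : row i (kermx (row_mx X Y)) *m row_mx X Y = 0 by rewrite -row_mul mulmx_ker row0.
by rewrite mul_mx_row => /eqP; rewrite row_mx_eq0 => /andP[/eqP wX /eqP wY]; exact: inj.
Qed.

Section PairEncoding.
Variables (R : realType) (m : nat).

Definition mxpair (p : 'cV[R]_m * 'cV[R]_m) : 'rV[R]_(m + m) := row_mx p.1^T p.2^T.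
Definition pairmx (w : 'rV[R]_(m + m)) : 'cV[R]_m * 'cV[R]_m :=
  ((lsubmx w)^T, (rsubmx w)^T).

Lemma mxpairK : cancel mxpair pairmx.
Proof. by case=> x y; rewrite /pairmx /mxpair /= row_mxKl row_mxKr !trmxK. Qed.

Lemma pairmxK : cancel pairmx mxpair.
Proof. by move=> w; rewrite /pairmx /mxpair /= !trmxK hsubmxK. Qed.

Lemma contr_mulmx (a y : 'cV[R]_m) : contr a y = (a^T *m y) 0 0.
Proof. by rewrite /contr mxE; apply: eq_bigr => i _; rewrite mxE. Qed.

End PairEncoding.

Section ImageBD.
Variables (R : realType) (m : nat) (B D : 'M[R]_m).

Definition imBD : set ('cV[R]_m * 'cV[R]_m) :=
  [set p | exists z, p = (B *m z, D^T *m z)].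

Lemma LBDE u : LBD B D u = imBD.
Proof.
have Z0 : Zfac u != 0 by rewrite gt_eqF // Zfac_gt0.
apply/seteqP; split => p [z ->]; first by exists (Zfac u *: z); rewrite !scalemxAr.
by exists ((Zfac u)^-1 *: z); rewrite -!scalemxAr !scalerA divff // !scale1r.
Qed.

Lemma imBD_lin_subspace : lin_subspace imBD.
Proof.
split; first by exists 0; rewrite !mulmx0.
split; first by move=> _ _ [z1 ->] [z2 ->]; exists (z1 + z2); rewrite !mulmxDr.
by move=> c _ [z ->]; exists (c *: z); rewrite !scalemxAr.
Qed.

Lemma imBD_isotropic : (D *m B)^T = - (D *m B) ->
  forall p1 p2, imBD p1 -> imBD p2 -> contr p2.2 p1.1 + contr p1.2 p2.1 = 0.
Proof.
move=> anti _ _ [z ->] [w ->] /=.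
have tr11 (M : 'M[R]_1) : M 0 0 = M^T 0 0 by rewrite mxE.
rewrite !contr_mulmx [X in _ + X]tr11 !trmx_mul !trmxK !mulmxA.
rewrite -[w^T *m B^T *m D^T]mulmxA -trmx_mul anti mulmxN mulNmx !mulmxA.
by rewrite [X in _ + X]mxE subrr.
Qed.

Definition genBD : 'M[R]_(m, m + m) := row_mx B^T D.

Lemma imBD_submx p : imBD p <-> (mxpair p <= genBD)%MS.
Proof.
split=> [[z ->]|/submxP[w e]].
  by apply/submxP; exists z^T; rewrite /mxpair /genBD mul_mx_row !trmx_mul trmxK.
exists w^T; rewrite -[p]mxpairK e /genBD mul_mx_row /pairmx row_mxKl row_mxKr.
by rewrite !trmx_mul !trmxK.
Qed.

Definition frameBD (i : 'I_(\rank genBD)) : 'cV[R]_m * 'cV[R]_m :=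
  pairmx (row i (row_base genBD)).

Lemma lin_comb_frameBD (c : 'I_(\rank genBD) -> R) :
  lin_comb c frameBD = pairmx (\row_i c i *m row_base genBD).
Proof.
rewrite /lin_comb /frameBD /pairmx /=; congr pair; apply/matrixP => k l;
  by rewrite !mxE summxE; apply: eq_bigr => i _; rewrite !mxE.
Qed.

Lemma imBD_span p : imBD p <-> exists c, p = lin_comb c frameBD.
Proof.
rewrite imBD_submx -(eq_row_base genBD); split=> [/submxP[w e]|[c ->]].
  exists (fun i => w 0 i); rewrite lin_comb_frameBD -[p]mxpairK e.
  by congr (pairmx (_ *m _)); apply/rowP => i; rewrite mxE.
by rewrite lin_comb_frameBD pairmxK; apply/submxP; exists (\row_i c i).
Qed.

Lemma frameBD_free c : lin_comb c frameBD = (0, 0) -> forall i, c i = 0.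
Proof.
rewrite lin_comb_frameBD => /(congr1 (@mxpair R m)); rewrite pairmxK => c0 i.
have : \row_i c i *m row_base genBD = 0 *m row_base genBD.
  by rewrite mul0mx c0 /mxpair /= !trmx0 row_mx0.
by move/(row_free_inj (row_base_free genBD))/rowP/(_ i); rewrite !mxE.
Qed.

Lemma imBD_kernel :
  exists K1 K2 : 'M[R]_(m + m, m), forall p, imBD p <-> K1 *m p.1 + K2 *m p.2 = 0.
Proof.
set C := cokermx genBD; exists (usubmx C)^T, (dsubmx C)^T => p.
rewrite imBD_submx submxE -[C in mxpair p *m C]vsubmxK /mxpair mul_row_col.
rewrite -[_ + _]trmxK raddfD /= !trmx_mul !trmxK trmx_eq0.
by split=> /eqP.
Qed.

Definition annBD : 'M[R]_(m + m, m) := col_mx D^T B.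

Lemma mxpair_annBD p j :
  (mxpair p *m annBD) 0 j = contr (D^T *m ebasis R j) p.1 + contr p.2 (B *m ebasis R j).
Proof.
rewrite mul_row_col !mxE /contr /ebasis -!colE.
by congr (_ + _); apply: eq_bigr => k _; rewrite !mxE // mulrC.
Qed.

Lemma imBD_maximal : (D *m B)^T = - (D *m B) ->
  (forall z : 'cV[R]_m, B *m z = 0 -> D^T *m z = 0 -> z = 0) ->
  forall p, (forall z : 'cV[R]_m, contr (D^T *m z) p.1 + contr p.2 (B *m z) = 0) ->
  imBD p.
Proof.
move=> anti inj p orth.
have inj_tr (w : 'rV[R]_m) : w *m B^T = 0 -> w *m D = 0 -> w = 0.
  move=> /(congr1 trmx) wB /(congr1 trmx) wD.
  rewrite !trmx_mul trmxK trmx0 in wB wD.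
  by apply: trmx_inj; rewrite trmx0; exact: inj.
have free_gen : row_free genBD by exact: row_free_row_mx.
have free_ann : row_free annBD^T.
  by rewrite tr_col_mx trmxK; apply: row_free_row_mx => w wD wB; exact: inj_tr.
have gen_ann : (genBD <= kermx annBD)%MS.
  by apply/sub_kermxP; rewrite mul_row_col -trmx_mul anti addNr.
have rank_ker : \rank (kermx annBD) = m.
  by rewrite mxrank_ker -mxrank_tr (eqP free_ann) addnK.
have ker_gen : (kermx annBD <= genBD)%MS.
  by rewrite -(mxrank_leqif_sup gen_ann).2 rank_ker (eqP free_gen).
apply/imBD_submx/(submx_trans _ ker_gen)/sub_kermxP/rowP => j.
by rewrite mxpair_annBD orth mxE.
Qed.

End ImageBD.

Section Smoothness.
Context {R : realType} {m : nat}.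

Lemma smooth_cst (W : normedModType R) (c : W) : smooth (fun _ : 'cV[R]_m => c).
Proof.
move=> k; elim: k c => [|k IH] c /=; first exact: cst_continuous.
split=> [x|v]; first exact: differentiable_cst.
have -> : (fun x => derive (fun _ : 'cV[R]_m => c) x v) = (fun _ => 0).
  by apply/funext => x; exact: derive_cst.
exact: IH.
Qed.

Lemma smooth_derivable (W : normedModType R) (f : 'cV[R]_m -> W) :
  smooth f -> forall x v, derivable f x v.
Proof. by move=> sf x v; case: (sf 1%N) => df _; exact: diff_derivable. Qed.

End Smoothness.

Arguments smooth_derivable {R m W f} sf x v.

Section IsotropicSections.
Variables (R : realType) (m : nat) (W : set ('cV[R]_m * 'cV[R]_m)).
Hypothesis W_iso : forall p1 p2, W p1 -> W p2 -> contr p2.2 p1.1 + contr p1.2 p2.1 = 0.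
Variables (X a Y b : 'cV[R]_m -> 'cV[R]_m) (u : 'cV[R]_m).
Hypotheses (dX : forall v, derivable X u v) (da : forall v, derivable a u v).
Hypotheses (dY : forall v, derivable Y u v) (db : forall v, derivable b u v).
Hypotheses (WXa : W (X u, a u)) (WYb : W (Y u, b u)).
Hypotheses (WdXa : forall v, W ('D_v X u, 'D_v a u)).
Hypotheses (WdYb : forall v, W ('D_v Y u, 'D_v b u)).

Lemma derive_contr_diff v :
  'D_v (fun x => (contr (a x) (Y x) - contr (b x) (X x) : R^o)) u =
  contr (a u) ('D_v Y u) + contr ('D_v a u) (Y u)
  - (contr (b u) ('D_v X u) + contr ('D_v b u) (X u)).
Proof.
rewrite (_ : (fun x => _) = (fun x => contr (a x) (Y x) : R^o)
                          - (fun x => contr (b x) (X x) : R^o)) //.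
by rewrite deriveB ?derive_contr //; exact: derivable_contr.
Qed.

Lemma courant_isotropic :
  courant X a Y b u = ('D_(X u) Y u - 'D_(Y u) X u, 'D_(X u) b u - 'D_(Y u) a u).
Proof.
rewrite /courant /lie_bracket; congr pair.
apply/matrixP => i j; rewrite (ord1 j) /lie_der1 /dfun !mxE derive_contr_diff.
have := W_iso WXa (WdYb (ebasis R i)); have := W_iso WYb (WdXa (ebasis R i)).
rewrite /=; lra.
Qed.

End IsotropicSections.

Lemma imBD_courant_closed (R : realType) m (B D : 'M[R]_m) :
  (D *m B)^T = - (D *m B) ->
  forall X a Y b : 'cV[R]_m -> 'cV[R]_m,
  smooth X -> smooth a -> smooth Y -> smooth b ->
  (forall u, imBD B D (X u, a u)) -> (forall u, imBD B D (Y u, b u)) ->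
  forall u, imBD B D (courant X a Y b u).
Proof.
move=> anti X a Y b sX sa sY sb Xa Yb u.
have [K1 [K2 kerP]] := imBD_kernel B D.
have imBD_derive (Z c : 'cV[R]_m -> 'cV[R]_m) : smooth Z -> smooth c ->
    (forall x, imBD B D (Z x, c x)) -> forall v, imBD B D ('D_v Z u, 'D_v c u).
  move=> sZ sc Zc v; apply/kerP; apply: derive_kernel_eq0; try exact: smooth_derivable.
  by move=> x; exact: (kerP (_, _)).1 (Zc x).
rewrite (courant_isotropic (imBD_isotropic anti)
  (smooth_derivable sX u) (smooth_derivable sa u)
  (smooth_derivable sY u) (smooth_derivable sb u) (Xa u) (Yb u)
  (imBD_derive _ _ sX sa Xa) (imBD_derive _ _ sY sb Yb)).
case: (imBD_derive _ _ sY sb Yb (X u)) => z1 [-> ->].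
case: (imBD_derive _ _ sX sa Xa (Y u)) => z2 [-> ->].
by exists (z1 - z2); rewrite !mulmxBr.
Qed.

Section LBDStructure.
Variables (R : realType) (m : nat) (B D : 'M[R]_m).

Lemma LBD_smooth_subbundle : smooth_subbundle (LBD B D).
Proof.
split=> [u|u0]; first by rewrite LBDE; exact: imBD_lin_subspace.
exists setT; split; first exact: openT.
split=> //; exists (\rank (genBD B D)), (fun i _ => @frameBD _ _ B D i).
split=> [i|u _]; first by split; exact: smooth_cst.
by split; [move=> p; rewrite LBDE; exact: imBD_span | exact: frameBD_free].
Qed.

Hypothesis anti : (D *m B)^T = - (D *m B).

Lemma LBD_isotropic u : isotropic_set (LBD B D u).
Proof.
rewrite LBDE => p1 p2 Vp1 Vp2.
by rewrite /pairing (imBD_isotropic anti Vp1 Vp2) mul0r.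
Qed.

Lemma LBD_courant_closed : courant_closed (LBD B D).
Proof.
move=> X a Y b sX sa sY sb Xa Yb u; rewrite LBDE.
by apply: imBD_courant_closed => // x; rewrite -(LBDE B D x).
Qed.

Lemma LBD_big_isotropic : big_isotropic (LBD B D).
Proof.
split; first exact: LBD_smooth_subbundle.
by split; [exact: LBD_isotropic | exact: LBD_courant_closed].
Qed.

Hypothesis inj : forall z : 'cV[R]_m, B *m z = 0 -> D^T *m z = 0 -> z = 0.

Lemma LBD_maximal_isotropic u : maximal_isotropic_set (LBD B D u).
Proof.
split=> [|W' _ W'_iso LW']; first exact: LBD_isotropic.
apply/seteqP; split=> [p W'p|]; last exact: LW'.
rewrite LBDE; apply: imBD_maximal => // z.
have Lz : LBD B D u (B *m z, D^T *m z) by rewrite LBDE; exists z.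
by have := W'_iso _ _ W'p (LW' _ Lz); rewrite /pairing /=; lra.
Qed.

Lemma LBD_dirac_structure : dirac_structure (LBD B D).
Proof.
split; first exact: LBD_smooth_subbundle.
by split; [exact: LBD_maximal_isotropic | exact: LBD_courant_closed].
Qed.

End LBDStructure.

Lemma Ytilde_hamiltonian (R : realType) m (A : 'M[R]_m.+1) q (D : 'M[R]_m) :
  is_diag_mx (D^T *m Q1 q) -> hamiltonian (LBD (Bmat A) D) (Ytilde A q) (HD D q).
Proof. by move=> diag u; exists (Defs.eta q u); rewrite dfun_HD_diag. Qed.

Theorem theorem4p6 (R : realType) (m : nat) (A : 'M[R]_m.+1) (q : 'cV[R]_m.+1)
    (D : 'M[R]_m) :
  (0 < m)%N ->
  formal_equilibrium A q ->
  (D *m Bmat A)^T = - (D *m Bmat A) ->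
  is_diag_mx ((D^T) *m Q1 q) ->
  big_isotropic (LBD (Bmat A) D) /\
  ((forall z : 'cV[R]_m, Bmat A *m z = 0 -> D^T *m z = 0 -> z = 0) ->
     dirac_structure (LBD (Bmat A) D)) /\
  hamiltonian (LBD (Bmat A) D) (Ytilde A q) (HD D q).
Proof.
move=> _ _ anti diag; split; first exact: LBD_big_isotropic.
by split; [exact: LBD_dirac_structure | exact: Ytilde_hamiltonian].
Qed.
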